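(* Let $\mathfrak E=(\mathfrak e_1,\dots,\mathfrak e_n)$ be an admissible sequence of virtual extended $\mathbb Z$-segments with $\mathrm{NV}(\mathfrak E)\ne0$. Then the set $[\mathfrak E]^{(P'')}$ consists of exactly one element.
   Context: A $\mathbb Z$-segment is $[A,B]=\{A,\dots,B\}$ ($A\ge B$ integers), length $b=A-B+1$. A virtual extended $\mathbb Z$-segment is $([A,B],l,\eta)$, $l\in\mathbb Z$, $l\le b/2$, $\eta\in\{\pm1\}$ with $\eta\sim-\eta$ iff $b=2l$; extended if $l\ge0$; $\mathrm{Supp}=[A,B]$. A sequence $(\mathfrak e_1,\dots,\mathfrak e_n)$ with supports $[A_i,B_i]$ is admissible if $A_i<A_j$ and $B_i<B_j$ imply $i<j$. Pairwise non-vanishing: for admissible $(\mathfrak e_1,\mathfrak e_2)$ with $\mathfrak e_i=([A_i,B_i],l_i,\eta_i)$, $b_i=A_i-B_i+1$, $\epsilon=(-1)^{A_1-B_1}\eta_1\eta_2$, write $\mathrm{NV}(\mathfrak e_1,\mathfrak e_2)\ne0$ iff both are extended and all applicable conditions hold: (a) if $A_1\le A_2$, $B_1\le B_2$: $\epsilon=1\Rightarrow B_1+l_1\le B_2+l_2,\ A_1-l_1\le A_2-l_2$; $\epsilon=-1\Rightarrow A_1-l_1<B_2+l_2$; (b) if $A_1\le A_2$, $B_1\ge B_2$: $\epsilon=1\Rightarrow0\le l_2-l_1\le b_2-b_1$; $\epsilon=-1\Rightarrow l_1+l_2\ge b_1$; (c) if $A_1\ge A_2$, $B_1\le B_2$: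 $\epsilon=1\Rightarrow0\le l_1-l_2\le b_1-b_2$; $\epsilon=-1\Rightarrow l_1+l_2\ge b_2$. Row exchange $R(\mathfrak e_1,\mathfrak e_2)=(\mathfrak e_2',\mathfrak e_1')$ for nested supports, $\mathfrak e_i'=([A_i,B_i],l_i',\eta_i')$: Case 1, $[A_1,B_1]\subseteq[A_2,B_2]$: $(l_1',\eta_1')=(l_1,(-1)^{A_2-B_2}\eta_1)$; if $\epsilon=1$ and $b_2-2l_2<2(b_1-2l_1)$, $(l_2',\eta_2')=(b_2-l_2-(b_1-2l_1),(-1)^{A_1-B_1}\eta_2)$; if $\epsilon=1$ and $b_2-2l_2\ge2(b_1-2l_1)$, $(l_2',\eta_2')=(l_2+b_1-2l_1,(-1)^{A_1-B_1+1}\eta_2)$; if $\epsilon=-1$, $(l_2',\eta_2')=(l_2-(b_1-2l_1),(-1)^{A_1-B_1+1}\eta_2)$. Case 2, $[A_1,B_1]\supsetneq[A_2,B_2]$: $(l_2',\eta_2')=(l_2,(-1)^{A_1-B_1}\eta_2)$; if $\epsilon=1$ and $b_1-2l_1<2(b_2-2l_2)$, $(l_1',\eta_1')=(b_1-l_1-(b_2-2l_2),(-1)^{A_2-B_2}\eta_1)$; if $\epsilon=1$ and $b_1-2l_1\ge2(b_2-2l_2)$, $(l_1',\eta_1')=(l_1+b_2-2l_2,(-1)^{A_2-B_2+1}\eta_1)$; if $\epsilon=-1$, $(l_1',\eta_1')=(l_1-(b_2-2l_2),(-1)^{A_2-B_2+1}\eta_1)$. For $\mathfrak E=(\mathfrak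 e_1,\dots,\mathfrak e_n)$ and $1\le k\le n-1$ with $\mathrm{Supp}(\mathfrak e_k),\mathrm{Supp}(\mathfrak e_{k+1})$ nested, $R_k(\mathfrak E)$ replaces $(\mathfrak e_k,\mathfrak e_{k+1})$ by $R(\mathfrak e_k,\mathfrak e_{k+1})$. $[\mathfrak E]$ is the set of sequences obtained from $\mathfrak E$ by finitely many such $R_k$. $\widetilde{\mathrm{NV}}(\mathfrak E)\ne0$ means $\mathrm{NV}(\mathfrak e_i,\mathfrak e_{i+1})\ne0$ for all $i$; $\mathrm{NV}(\mathfrak E)\ne0$ means $\widetilde{\mathrm{NV}}(\mathfrak E')\ne0$ for all $\mathfrak E'\in[\mathfrak E]$. A sequence satisfies $(P'')$ if $i<j$ implies $B_i\le B_j$, and $A_i\ge A_j$ when $B_i=B_j$. $[\mathfrak E]^{(P'')}$ is the set of members of $[\mathfrak E]$ satisfying $(P'')$. *)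

From Stdlib Require Import Bool ZArith List Relations.
Import ListNotations.
Open Scope Z_scope.

(* A virtual extended Z-segment ([A,B], l, eta); eta is +1 or -1 (as an integer). *)
Record seg := mkSeg { sA : Z; sB : Z; sl : Z; seta : Z }.

Definition blen (e : seg) : Z := sA e - sB e + 1.

Definition sgnpow (k : Z) : Z := if Z.even k then 1 else -1.

Definition valid_seg (e : seg) : Prop :=
  sB e <= sA e /\ 2 * sl e <= blen e /\ (seta e = 1 \/ seta e = -1).

Definition extended (e : seg) : Prop := 0 <= sl e.

(* The identification eta ~ -eta when b = 2l. *)
Definition seg_equiv (e f : seg) : Prop :=
  sA e = sA f /\ sB e = sB f /\ sl e = sl f /\
  (seta e = seta f \/ blen e = 2 * sl e).

Definition dflt : seg := mkSeg 0 0 0 1.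

Definition admissible (E : list seg) : Prop :=
  forall i j : nat, (i < length E)%nat -> (j < length E)%nat ->
    sA (nth i E dflt) < sA (nth j E dflt) ->
    sB (nth i E dflt) < sB (nth j E dflt) -> (i < j)%nat.

Definition eps (e1 e2 : seg) : Z := sgnpow (sA e1 - sB e1) * seta e1 * seta e2.

Definition NV_pair (e1 e2 : seg) : Prop :=
  let A1 := sA e1 in let B1 := sB e1 in let l1 := sl e1 in let b1 := blen e1 in
  let A2 := sA e2 in let B2 := sB e2 in let l2 := sl e2 in let b2 := blen e2 in
  let ep := eps e1 e2 in
  extended e1 /\ extended e2 /\
  (A1 <= A2 -> B1 <= B2 ->
     (ep = 1 -> B1 + l1 <= B2 + l2 /\ A1 - l1 <= A2 - l2) /\
     (ep = -1 -> A1 - l1 < B2 + l2)) /\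
  (A1 <= A2 -> B1 >= B2 ->
     (ep = 1 -> 0 <= l2 - l1 <= b2 - b1) /\
     (ep = -1 -> l1 + l2 >= b1)) /\
  (A1 >= A2 -> B1 <= B2 ->
     (ep = 1 -> 0 <= l1 - l2 <= b1 - b2) /\
     (ep = -1 -> l1 + l2 >= b2)).

Definition seg_sub (e1 e2 : seg) : Prop := sB e2 <= sB e1 /\ sA e1 <= sA e2.

Definition nested (e1 e2 : seg) : Prop := seg_sub e1 e2 \/ seg_sub e2 e1.

(* Row exchange R(e1,e2) = (e2', e1'); case 1 when Supp e1 ⊆ Supp e2,
   case 2 otherwise (used only when Supp e1 ⊋ Supp e2). *)
Definition row_exchange (e1 e2 : seg) : seg * seg :=
  let A1 := sA e1 in let B1 := sB e1 in let l1 := sl e1 in let b1 := blen e1 in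
  let A2 := sA e2 in let B2 := sB e2 in let l2 := sl e2 in let b2 := blen e2 in
  let h1 := seta e1 in let h2 := seta e2 in
  let ep := eps e1 e2 in
  if (B2 <=? B1) && (A1 <=? A2) then
    let e1' := mkSeg A1 B1 l1 (sgnpow (A2 - B2) * h1) in
    let e2' :=
      if ep =? 1 then
        if b2 - 2 * l2 <? 2 * (b1 - 2 * l1)
        then mkSeg A2 B2 (b2 - l2 - (b1 - 2 * l1)) (sgnpow (A1 - B1) * h2)
        else mkSeg A2 B2 (l2 + b1 - 2 * l1) (sgnpow (A1 - B1 + 1) * h2)
      else mkSeg A2 B2 (l2 - (b1 - 2 * l1)) (sgnpow (A1 - B1 + 1) * h2) in
    (e2', e1')
  else
    let e2' := mkSeg A2 B2 l2 (sgnpow (A1 - B1) * h2) in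
    let e1' :=
      if ep =? 1 then
        if b1 - 2 * l1 <? 2 * (b2 - 2 * l2)
        then mkSeg A1 B1 (b1 - l1 - (b2 - 2 * l2)) (sgnpow (A2 - B2) * h1)
        else mkSeg A1 B1 (l1 + b2 - 2 * l2) (sgnpow (A2 - B2 + 1) * h1)
      else mkSeg A1 B1 (l1 - (b2 - 2 * l2)) (sgnpow (A2 - B2 + 1) * h1) in
    (e2', e1').

Definition R_step (E E' : list seg) : Prop :=
  exists (pre post : list seg) (e1 e2 : seg),
    E = pre ++ e1 :: e2 :: post /\ nested e1 e2 /\
    E' = pre ++ (fst (row_exchange e1 e2)) :: (snd (row_exchange e1 e2)) :: post.

Definition in_class (E E' : list seg) : Prop := clos_refl_trans _ R_step E E'.

Definition NV_tilde (E : list seg) : Prop :=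
  forall i : nat, (S i < length E)%nat -> NV_pair (nth i E dflt) (nth (S i) E dflt).

Definition NV (E : list seg) : Prop := forall E', in_class E E' -> NV_tilde E'.

Definition P2 (E : list seg) : Prop :=
  forall i j : nat, (i < j)%nat -> (j < length E)%nat ->
    sB (nth i E dflt) <= sB (nth j E dflt) /\
    (sB (nth i E dflt) = sB (nth j E dflt) -> sA (nth i E dflt) >= sA (nth j E dflt)).

Definition seq_equiv (E F : list seg) : Prop := Forall2 seg_equiv E F.

From Stdlib Require Import Bool ZArith List Relations Lia Sorted Wf_nat Relations_3_facts.
Import ListNotations.
Open Scope Z_scope.

(* Pick the representative eta = 1 of each class eta ~ -eta (when b = 2l), so that
   equality of sequences up to this identification becomes literal equality of the
   normalised sequences, and orient the normalised row exchanges: swap an adjacent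
   pair whose supports violate (P''), such a pair being nested by admissibility.
   Each swap lowers the number of inverted pairs, and the terminal sequences are
   exactly those satisfying (P''). The system is locally confluent (overlapping
   swaps close up by the braid relation for three nested segments, the others
   commute), so by Newman's lemma every admissible sequence has a unique normal
   form. A row exchange inside [E] is an oriented swap, the inverse of one (the
   exchange is an involution on nested pairs with distinct supports), or, for equal
   supports, the identity: this is where NV(E) <> 0 enters. Hence all members of [E]
   share one normal form, a member with (P'') is its own normal form, and lifting the
   oriented swaps back to row exchanges produces such a member. *)

Section NormalForms.
Context {U : Type}.
Variable R : Relation U.

Definition irreducible (x : U) : Prop := forall y, ~ R x y.
Definition normal_form (x n : U) : Prop := Rstar U R x n /\ irreducible n.

Lemma Rstar_irreducible x y : irreducible x -> Rstar U R x y -> y = x.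
Proof. intros Hx [|y' z Hxy _]; [reflexivity | exfalso; exact (Hx y' Hxy)]. Qed.

Lemma Noetherian_of_measure (size : U -> nat) :
  (forall x y, R x y -> (size y < size x)%nat) -> Noetherian U R.
Proof.
  intros Hsize x. induction x as [x IH] using (induction_ltof1 _ size).
  constructor. intros y Hxy. apply IH, Hsize, Hxy.
Qed.

Hypothesis R_noetherian : Noetherian U R.

Hypothesis R_decidable : forall x, (exists y, R x y) \/ irreducible x.

Lemma normal_form_exists x : exists n, normal_form x n.
Proof.
  induction (R_noetherian x) as [x _ IH].
  destruct (R_decidable x) as [[y Hxy]|Hirr].
  - destruct (IH y Hxy) as (n & Hyn & Hn). exists n. split; [apply Rstar_n with y|]; assumption.
  - exists x. split; [constructor | exact Hirr].
Qed.

Variable good : U -> Prop.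
Hypothesis good_step : forall x y, good x -> R x y -> good y.
Hypothesis good_locally_confluent : forall x, good x -> locally_confluent U R x.

Let R_good (x y : U) : Prop := good x /\ R x y.

Lemma Rstar_good x y : good x -> Rstar U R x y -> Rstar U R_good x y.
Proof.
  intros Hx Hxy. induction Hxy as [|x y z Hxy _ IH]; [constructor|].
  apply Rstar_n with y; [split|apply IH; apply good_step with x]; assumption.
Qed.

Lemma normal_form_unique x n m : good x -> normal_form x n -> normal_form x m -> n = m.
Proof.
  intros Hx [Hxn Hn] [Hxm Hm].
  assert (Hconf : Confluent U R_good).
  { apply Newman.
    - apply Noetherian_contains_Noetherian with R; [exact R_noetherian | intros y z []; assumption].
    - intros y z1 z2 [Hy Hyz1] [_ Hyz2].
      destruct (good_locally_confluent y Hy z1 z2 Hyz1 Hyz2) as (w & Hz1w & Hz2w).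
      exists w. split; apply Rstar_good; eauto. }
  destruct (Hconf x n m (Rstar_good x n Hx Hxn) (Rstar_good x m Hx Hxm)) as (w & Hnw & Hmw).
  assert (Hweaken : contains U (Rstar U R) (Rstar U R_good))
    by (apply star_monotone; intros y z []; assumption).
  rewrite <- (Rstar_irreducible n w Hn (Hweaken n w Hnw)).
  exact (Rstar_irreducible m w Hm (Hweaken m w Hmw)).
Qed.

Lemma normal_form_step x y n : good x -> R x y -> normal_form x n -> normal_form y n.
Proof.
  intros Hx Hxy Hn. destruct (normal_form_exists y) as (n' & Hyn' & Hn').
  replace n with n'; [split; assumption|].
  apply normal_form_unique with x; [exact Hx | split; [apply Rstar_n with y|]; assumption | exact Hn].
Qed.
End NormalForms.

Definition canon (e : seg) : seg :=
  mkSeg (sA e) (sB e) (sl e) (if blen e =? 2 * sl e then 1 else seta e).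

Definition canonical (e : seg) : Prop :=
  valid_seg e /\ (blen e = 2 * sl e -> seta e = 1).

Definition canon_rex (x y : seg) : seg * seg :=
  (canon (fst (row_exchange x y)), canon (snd (row_exchange x y))).

Lemma sgnpow_add1 k : sgnpow (k + 1) = - sgnpow k.
Proof. unfold sgnpow. rewrite Z.even_add. simpl. destruct (Z.even k); reflexivity. Qed.

Lemma sgnpow_parity k :
  (sgnpow k = 1 /\ exists q, k = 2 * q) \/ (sgnpow k = -1 /\ exists q, k = 2 * q + 1).
Proof.
  unfold sgnpow. destruct (Z.even k) eqn:Hk; [left | right]; split; auto.
  - apply Z.even_spec in Hk. destruct Hk as [q Hq]. exists q; lia.
  - assert (Ho : Z.odd k = true) by (rewrite <- Z.negb_even, Hk; auto).
    apply Z.odd_spec in Ho. destruct Ho as [q Hq]. exists q; lia.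
Qed.

(* Closed forms of [canon_rex] in the two branches of [row_exchange] (support of the
   first segment inside that of the second, or not), written with the signs
   s_i = (-1)^(A_i - B_i) and the defects d_i = b_i - 2 l_i. The tactic [canon_rex_step]
   rewrites with them and discards the branches refuted by lia; after splitting signs
   and parities, every identity between row exchanges below is closed this way. *)
Lemma canon_rex_sub_spec A1 B1 l1 h1 A2 B2 l2 h2 :
  B2 <= B1 -> A1 <= A2 -> (h1 = 1 \/ h1 = -1) -> (h2 = 1 \/ h2 = -1) ->
  2 * l1 <= A1 - B1 + 1 -> 2 * l2 <= A2 - B2 + 1 ->
  let s1 := sgnpow (A1 - B1) in let s2 := sgnpow (A2 - B2) in
  let b1 := A1 - B1 + 1 in let b2 := A2 - B2 + 1 in
  let d1 := b1 - 2 * l1 in let d2 := b2 - 2 * l2 in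
  exists l2' h2' h1',
    canon_rex (mkSeg A1 B1 l1 h1) (mkSeg A2 B2 l2 h2) = (mkSeg A2 B2 l2' h2', mkSeg A1 B1 l1 h1') /\
    ((b1 = 2 * l1 /\ h1' = 1) \/ (2 * l1 < b1 /\ h1' = s2 * h1)) /\
    exists h, ((b2 = 2 * l2' /\ h2' = 1) \/ (2 * l2' < b2 /\ h2' = h)) /\
    ((s1 * h1 * h2 = 1 /\ d2 < 2 * d1 /\ l2' = b2 - l2 - d1 /\ h = s1 * h2) \/
     (s1 * h1 * h2 = 1 /\ d2 >= 2 * d1 /\ l2' = l2 + d1 /\ h = - (s1 * h2)) \/
     (s1 * h1 * h2 = -1 /\ l2' = l2 - d1 /\ h = - (s1 * h2))).
Proof.
  intros HB HA Hh1 Hh2 Hw1 Hw2. cbv zeta.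
  unfold canon_rex, row_exchange, canon, eps, blen; cbn [sA sB sl seta].
  replace ((B2 <=? B1) && (A1 <=? A2))%bool with true
    by (symmetry; apply andb_true_intro; split; apply Z.leb_le; lia).
  rewrite !sgnpow_add1.
  set (s1 := sgnpow (A1 - B1)). set (s2 := sgnpow (A2 - B2)).
  destruct (Z.eqb_spec (s1 * h1 * h2) 1) as [He|He];
    [destruct (Z.ltb_spec (A2 - B2 + 1 - 2 * l2) (2 * (A1 - B1 + 1 - 2 * l1))) as [Hl|Hl]|];
    cbn [sA sB sl seta fst snd]; eexists _, _, _; (split; [reflexivity|]);
    (split; [destruct (Z.eqb_spec (A1 - B1 + 1) (2 * l1)); [left|right]; split; auto; lia|]).
  - exists (s1 * h2).
    split; [destruct (Z.eqb_spec (A2 - B2 + 1) (2 * (A2 - B2 + 1 - l2 - (A1 - B1 + 1 - 2 * l1))));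
            [left|right]; split; auto; lia|].
    left; repeat split; auto; lia.
  - exists (- s1 * h2).
    split; [destruct (Z.eqb_spec (A2 - B2 + 1) (2 * (l2 + (A1 - B1 + 1) - 2 * l1)));
            [left|right]; split; auto; lia|].
    right; left; repeat split; auto; lia.
  - exists (- s1 * h2).
    split; [destruct (Z.eqb_spec (A2 - B2 + 1) (2 * (l2 - (A1 - B1 + 1 - 2 * l1))));
            [left|right]; split; auto; lia|].
    right; right; repeat split; auto; try lia.
    destruct (sgnpow_parity (A1 - B1)) as [[Hs _]|[Hs _]]; fold s1 in Hs; rewrite Hs in *;
      destruct Hh1, Hh2; subst; lia.
Qed.

Lemma canon_rex_nsub_spec A1 B1 l1 h1 A2 B2 l2 h2 :
  ~ (B2 <= B1 /\ A1 <= A2) -> (h1 = 1 \/ h1 = -1) -> (h2 = 1 \/ h2 = -1) ->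
  2 * l1 <= A1 - B1 + 1 -> 2 * l2 <= A2 - B2 + 1 ->
  let s1 := sgnpow (A1 - B1) in let s2 := sgnpow (A2 - B2) in
  let b1 := A1 - B1 + 1 in let b2 := A2 - B2 + 1 in
  let d1 := b1 - 2 * l1 in let d2 := b2 - 2 * l2 in
  exists l1' h1' h2',
    canon_rex (mkSeg A1 B1 l1 h1) (mkSeg A2 B2 l2 h2) = (mkSeg A2 B2 l2 h2', mkSeg A1 B1 l1' h1') /\
    ((b2 = 2 * l2 /\ h2' = 1) \/ (2 * l2 < b2 /\ h2' = s1 * h2)) /\
    exists h, ((b1 = 2 * l1' /\ h1' = 1) \/ (2 * l1' < b1 /\ h1' = h)) /\
    ((s1 * h1 * h2 = 1 /\ d1 < 2 * d2 /\ l1' = b1 - l1 - d2 /\ h = s2 * h1) \/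
     (s1 * h1 * h2 = 1 /\ d1 >= 2 * d2 /\ l1' = l1 + d2 /\ h = - (s2 * h1)) \/
     (s1 * h1 * h2 = -1 /\ l1' = l1 - d2 /\ h = - (s2 * h1))).
Proof.
  intros HBA Hh1 Hh2 Hw1 Hw2. cbv zeta.
  unfold canon_rex, row_exchange, canon, eps, blen; cbn [sA sB sl seta].
  replace ((B2 <=? B1) && (A1 <=? A2))%bool with false
    by (symmetry; apply andb_false_iff; rewrite !Z.leb_gt; lia).
  rewrite !sgnpow_add1.
  set (s1 := sgnpow (A1 - B1)). set (s2 := sgnpow (A2 - B2)).
  destruct (Z.eqb_spec (s1 * h1 * h2) 1) as [He|He];
    [destruct (Z.ltb_spec (A1 - B1 + 1 - 2 * l1) (2 * (A2 - B2 + 1 - 2 * l2))) as [Hl|Hl]|];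
    cbn [sA sB sl seta fst snd]; eexists _, _, _; (split; [reflexivity|]);
    (split; [destruct (Z.eqb_spec (A2 - B2 + 1) (2 * l2)); [left|right]; split; auto; lia|]).
  - exists (s2 * h1).
    split; [destruct (Z.eqb_spec (A1 - B1 + 1) (2 * (A1 - B1 + 1 - l1 - (A2 - B2 + 1 - 2 * l2))));
            [left|right]; split; auto; lia|].
    left; repeat split; auto; lia.
  - exists (- s2 * h1).
    split; [destruct (Z.eqb_spec (A1 - B1 + 1) (2 * (l1 + (A2 - B2 + 1) - 2 * l2)));
            [left|right]; split; auto; lia|].
    right; left; repeat split; auto; lia.
  - exists (- s2 * h1).
    split; [destruct (Z.eqb_spec (A1 - B1 + 1) (2 * (l1 - (A2 - B2 + 1 - 2 * l2))));
            [left|right]; split; auto; lia|].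
    right; right; repeat split; auto; try lia.
    destruct (sgnpow_parity (A1 - B1)) as [[Hs _]|[Hs _]]; fold s1 in Hs; rewrite Hs in *;
      destruct Hh1, Hh2; subst; lia.
Qed.

Ltac rewrite_signs_in H :=
  repeat match goal with Hs : sgnpow _ = _ |- _ => progress rewrite ?Hs in H end.

Ltac split_spec Hx Hy Hc :=
  cbv beta iota zeta in Hx, Hy, Hc |- *; cbn [fst snd];
  rewrite_signs_in Hx; rewrite_signs_in Hy; rewrite_signs_in Hc;
  destruct Hx as [[? ?]|[? ?]]; subst; try (exfalso; lia);
  destruct Hc as [(? & ? & ? & ?)|[(? & ? & ? & ?)|(? & ? & ?)]]; subst; try (exfalso; lia);
  destruct Hy as [[? ?]|[? ?]]; subst; try (exfalso; lia).

Ltac canon_rex_step :=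
  match goal with
  | |- context [canon_rex (mkSeg ?A1 ?B1 ?l1 ?h1) (mkSeg ?A2 ?B2 ?l2 ?h2)] =>
    let Heq := fresh "Heq" in let Hx := fresh "Hx" in let Hy := fresh "Hy" in
    let Hc := fresh "Hc" in
    first
    [ destruct (canon_rex_sub_spec A1 B1 l1 h1 A2 B2 l2 h2
                  ltac:(lia) ltac:(lia) ltac:(lia) ltac:(lia) ltac:(lia) ltac:(lia))
        as (?l' & ?h' & ?h1' & Heq & Hx & ?h & Hy & Hc)
    | destruct (canon_rex_nsub_spec A1 B1 l1 h1 A2 B2 l2 h2
                  ltac:(lia) ltac:(lia) ltac:(lia) ltac:(lia) ltac:(lia))
        as (?l' & ?h' & ?h1' & Heq & Hx & ?h & Hy & Hc) ];
    rewrite Heq; clear Heq; split_spec Hx Hy Hc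
  end.

Ltac destruct_signs :=
  repeat match goal with
  | H : ?h = 1 \/ ?h = -1 |- _ => is_var h; destruct H; subst h
  end.

Ltac destruct_parity a b :=
  let P := fresh "P" in let q := fresh "q" in let Q := fresh "Q" in
  destruct (sgnpow_parity (a - b)) as [[P [q Q]]|[P [q Q]]].

Definition supp (e : seg) : Z * Z := (sA e, sB e).

Lemma row_exchange_supp x y :
  supp (fst (row_exchange x y)) = supp y /\ supp (snd (row_exchange x y)) = supp x.
Proof.
  unfold supp, row_exchange.
  destruct (_ && _)%bool, (eps x y =? 1); try destruct (_ <? _); auto.
Qed.

Lemma canon_rex_supp x y :
  supp (fst (canon_rex x y)) = supp y /\ supp (snd (canon_rex x y)) = supp x.
Proof. exact (row_exchange_supp x y). Qed.

Lemma canon_rex_same_supp x y :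
  valid_seg x -> valid_seg y -> supp x = supp y -> NV_pair x y -> canon_rex x y = (canon x, canon y).
Proof.
  destruct x as [A B l1 h1], y as [A' B' l2 h2]. unfold supp; cbn [sA sB].
  intros Vx Vy Hs. injection Hs as <- <-. revert Vx Vy.
  unfold valid_seg, NV_pair, extended, eps, canon, blen; cbn [sA sB sl seta].
  intros (V1 & W1 & S1) (V2 & W2 & S2) Hnv.
  destruct (Z.eqb_spec (A - B + 1) (2 * l1)), (Z.eqb_spec (A - B + 1) (2 * l2));
    destruct_parity A B; rewrite P in Hnv; destruct_signs; try (exfalso; lia);
    canon_rex_step; f_equal; f_equal; lia.
Qed.

Lemma canon_rex_canon x y :
  valid_seg x -> valid_seg y -> canon_rex x y = canon_rex (canon x) (canon y).
Proof.
  destruct x as [A1 B1 l1 h1], y as [A2 B2 l2 h2].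
  unfold valid_seg, canon, blen; cbn [sA sB sl seta].
  intros (V1 & W1 & S1) (V2 & W2 & S2).
  destruct (Z.eqb_spec (A1 - B1 + 1) (2 * l1)), (Z.eqb_spec (A2 - B2 + 1) (2 * l2));
    destruct (Z_le_dec B2 B1), (Z_le_dec A1 A2);
    destruct_parity A1 B1; destruct_parity A2 B2; destruct_signs; try (exfalso; lia);
    canon_rex_step; try canon_rex_step; try reflexivity; f_equal; f_equal; lia.
Qed.

Lemma canon_rex_involutive x y :
  canonical x -> canonical y -> nested x y -> supp x <> supp y ->
  canon_rex (fst (canon_rex x y)) (snd (canon_rex x y)) = (x, y).
Proof.
  destruct x as [A1 B1 l1 h1], y as [A2 B2 l2 h2].
  unfold canonical, valid_seg, nested, seg_sub, supp, blen; cbn [sA sB sl seta].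
  intros ((V1 & W1 & S1) & N1) ((V2 & W2 & S2) & N2) Hn Hd.
  assert (Hd' : A1 <> A2 \/ B1 <> B2)
    by (destruct (Z.eq_dec A1 A2) as [<-|]; [right; intros <-; apply Hd|left]; reflexivity || assumption).
  clear Hd. destruct Hn; destruct_parity A1 B1; destruct_parity A2 B2; destruct_signs;
    try (exfalso; lia);
    canon_rex_step; cbn [fst snd]; canon_rex_step; f_equal; f_equal; lia.
Qed.

Lemma valid_row_exchange x y : valid_seg x -> valid_seg y ->
  valid_seg (fst (row_exchange x y)) /\ valid_seg (snd (row_exchange x y)).
Proof.
  destruct x as [A1 B1 l1 h1], y as [A2 B2 l2 h2].
  unfold valid_seg, row_exchange, eps, blen; cbn [sA sB sl seta].
  intros (V1 & W1 & S1) (V2 & W2 & S2).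
  rewrite !sgnpow_add1.
  destruct (sgnpow_parity (A1 - B1)) as [[-> _]|[-> _]];
    destruct (sgnpow_parity (A2 - B2)) as [[-> _]|[-> _]]; destruct_signs;
    repeat match goal with
    | |- context [if ?c then _ else _] =>
        lazymatch c with context [if _ then _ else _] => fail | _ => idtac end;
        let E := fresh "E" in destruct c eqn:E
    end; cbn [sA sB sl seta fst snd];
    repeat match goal with
    | H : (_ =? _) = true |- _ => apply Z.eqb_eq in H
    | H : (_ =? _) = false |- _ => apply Z.eqb_neq in H
    | H : (_ <? _) = true |- _ => apply Z.ltb_lt in H
    | H : (_ <? _) = false |- _ => apply Z.ltb_ge in H
    | H : (_ <=? _) = true |- _ => apply Z.leb_le in H
    | H : (_ <=? _) = false |- _ => apply Z.leb_gt in H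
    | H : (_ && _)%bool = true |- _ => apply andb_prop in H; destruct H
    end; lia.
Qed.

Lemma canonical_canon e : valid_seg e -> canonical (canon e).
Proof.
  destruct e as [A B l h]. unfold canonical, valid_seg, canon, blen; cbn [sA sB sl seta].
  intros (V & W & S). destruct (Z.eqb_spec (A - B + 1) (2 * l)); lia.
Qed.

Lemma canonical_canon_rex x y : canonical x -> canonical y ->
  canonical (fst (canon_rex x y)) /\ canonical (snd (canon_rex x y)).
Proof.
  intros [Vx _] [Vy _]. destruct (valid_row_exchange x y Vx Vy).
  split; apply canonical_canon; assumption.
Qed.

Lemma canon_rex_braid x y z :
  canonical x -> canonical y -> canonical z -> seg_sub x y -> seg_sub y z ->
  let y1 := fst (canon_rex x y) in let x1 := snd (canon_rex x y) in
  let z2 := fst (canon_rex x1 z) in let x2 := snd (canon_rex x1 z) in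
  let z3 := fst (canon_rex y1 z2) in let y3 := snd (canon_rex y1 z2) in
  let z4 := fst (canon_rex y z) in let y4 := snd (canon_rex y z) in
  let z5 := fst (canon_rex x z4) in let x5 := snd (canon_rex x z4) in
  let y6 := fst (canon_rex x5 y4) in let x6 := snd (canon_rex x5 y4) in
  z3 = z5 /\ y3 = y6 /\ x2 = x6.
Proof.
  destruct x as [a1 b1 l1 h1], y as [a2 b2 l2 h2], z as [a3 b3 l3 h3].
  unfold canonical, valid_seg, seg_sub, blen; cbn [sA sB sl seta].
  intros ((V1 & W1 & S1) & N1) ((V2 & W2 & S2) & N2) ((V3 & W3 & S3) & N3) [H1 H2] [H3 H4].
  cbv zeta.
  destruct_parity a1 b1; destruct_parity a2 b2; destruct_parity a3 b3; destruct_signs;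
    try (exfalso; lia);
    do 6 canon_rex_step; repeat split; f_equal; lia.
Qed.

Definition inverted (e f : seg) : Prop := sB f < sB e \/ (sB e = sB f /\ sA e < sA f).
Definition precedes (e f : seg) : Prop := sB e <= sB f /\ (sB e = sB f -> sA e >= sA f).
Definition invertedb (e f : seg) : bool :=
  (sB f <? sB e) || ((sB e =? sB f) && (sA e <? sA f)).

Lemma invertedb_spec e f : invertedb e f = true <-> inverted e f.
Proof.
  unfold invertedb, inverted.
  rewrite orb_true_iff, andb_true_iff, Z.ltb_lt, Z.eqb_eq, Z.ltb_lt. reflexivity.
Qed.

Lemma invertedb_supp e e' f f' :
  supp e = supp e' -> supp f = supp f' -> invertedb e f = invertedb e' f'.
Proof. unfold supp, invertedb. intros He Hf. injection He; injection Hf; congruence. Qed.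

Lemma inverted_supp e e' f f' :
  supp e = supp e' -> supp f = supp f' -> inverted e f -> inverted e' f'.
Proof. rewrite <- !invertedb_spec. intros He Hf. rewrite (invertedb_supp e e' f f' He Hf). auto. Qed.

Lemma precedes_or_inverted e f : precedes e f \/ inverted e f.
Proof. unfold precedes, inverted. lia. Qed.

Inductive sort_step : list seg -> list seg -> Prop :=
  | sort_step_here a b r : inverted a b ->
      sort_step (a :: b :: r) (fst (canon_rex a b) :: snd (canon_rex a b) :: r)
  | sort_step_cons e G G' : sort_step G G' -> sort_step (e :: G) (e :: G').

Lemma sort_step_app pre a b r : inverted a b ->
  sort_step (pre ++ a :: b :: r) (pre ++ fst (canon_rex a b) :: snd (canon_rex a b) :: r).
Proof. intros Hab. induction pre as [|e pre IH]; constructor; assumption. Qed.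

Lemma sort_step_app_inv G G' : sort_step G G' ->
  exists pre a b r, G = pre ++ a :: b :: r /\ inverted a b /\
    G' = pre ++ fst (canon_rex a b) :: snd (canon_rex a b) :: r.
Proof.
  induction 1 as [a b r Hab|e G G' _ (pre & a & b & r & -> & Hab & ->)].
  - exists [], a, b, r. auto.
  - exists (e :: pre), a, b, r. auto.
Qed.

Lemma Rstar_sort_step_cons e G G' :
  Rstar (list seg) sort_step G G' -> Rstar (list seg) sort_step (e :: G) (e :: G').
Proof.
  induction 1 as [|G G1 G2 H _ IH]; [constructor|].
  apply Rstar_n with (e :: G1); [constructor|]; assumption.
Qed.

Definition admissible_pair (p q : Z * Z) : Prop := ~ (fst q < fst p /\ snd q < snd p).
Definition supp_admissible (G : list seg) : Prop := ForallOrdPairs admissible_pair (map supp G).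

Lemma ForallOrdPairs_swap {X} (R : X -> X -> Prop) l1 a b l2 :
  ForallOrdPairs R (l1 ++ a :: b :: l2) -> R b a -> ForallOrdPairs R (l1 ++ b :: a :: l2).
Proof.
  induction l1 as [|c l1 IH]; simpl; intros H Hba.
  - inversion H as [|? ? Ha H']; subst. inversion H' as [|? ? Hb H'']; subst.
    inversion Ha; subst. repeat constructor; assumption.
  - inversion H as [|? ? Hc H']; subst. constructor; [|apply IH; assumption].
    apply Forall_app in Hc as [Hc1 Hc2]. apply Forall_app; split; [assumption|].
    inversion Hc2 as [|? ? ? Hc3]; subst. inversion Hc3; subst. repeat constructor; assumption.
Qed.

Lemma ForallOrdPairs_nth {X} (R : X -> X -> Prop) l d :
  (forall i j, (i < j < length l)%nat -> R (nth i l d) (nth j l d)) -> ForallOrdPairs R l.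
Proof.
  induction l as [|a l IH]; intros H; constructor.
  - apply Forall_forall. intros x Hx. destruct (In_nth l x d Hx) as (j & Hj & <-).
    apply (H 0%nat (S j)); simpl; lia.
  - apply IH. intros i j Hij. apply (H (S i) (S j)); simpl; lia.
Qed.

Lemma admissible_supp_admissible E : admissible E -> supp_admissible E.
Proof.
  intros H. apply (ForallOrdPairs_nth _ _ (supp dflt)). intros i j Hij.
  rewrite length_map in Hij. rewrite !map_nth. unfold admissible_pair, supp; cbn [fst snd].
  intros [HA HB]. specialize (H j i ltac:(lia) ltac:(lia) HA HB). lia.
Qed.

Lemma supp_admissible_adjacent pre a b r :
  supp_admissible (pre ++ a :: b :: r) -> admissible_pair (supp a) (supp b).
Proof.
  unfold supp_admissible. rewrite map_app. induction (map supp pre) as [|c l IH]; simpl.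
  - intros H. inversion H as [|? ? Ha _]. inversion Ha; assumption.
  - intros H. inversion H; auto.
Qed.

Lemma supp_admissible_exchange pre a b r a' b' :
  supp_admissible (pre ++ a :: b :: r) -> nested a b -> supp a' = supp b -> supp b' = supp a ->
  supp_admissible (pre ++ a' :: b' :: r).
Proof.
  unfold supp_admissible. rewrite !map_app. simpl. intros H Hn -> ->.
  apply ForallOrdPairs_swap; [assumption|].
  unfold nested, seg_sub, admissible_pair, supp in *; cbn [fst snd]. lia.
Qed.

Lemma inverted_seg_sub a b : inverted a b -> admissible_pair (supp a) (supp b) -> seg_sub a b.
Proof. unfold inverted, admissible_pair, supp, seg_sub; cbn [fst snd]. lia. Qed.

Definition canon_admissible (G : list seg) : Prop := Forall canonical G /\ supp_admissible G.

Lemma canon_admissible_tail e G : canon_admissible (e :: G) -> canon_admissible G.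
Proof.
  intros [Hc Ha]. split; [inversion Hc; assumption|].
  unfold supp_admissible in *. simpl in Ha. inversion Ha; assumption.
Qed.

Lemma canon_admissible_sort_step G G' : canon_admissible G -> sort_step G G' -> canon_admissible G'.
Proof.
  intros [Hc Ha] Hstep. destruct (sort_step_app_inv G G' Hstep) as (pre & a & b & r & -> & Hab & ->).
  apply Forall_app in Hc as [Hpre Hc]. inversion Hc as [|? ? Hca Hc']; subst.
  inversion Hc' as [|? ? Hcb Hr]; subst.
  destruct (canonical_canon_rex a b Hca Hcb). destruct (canon_rex_supp a b).
  split.
  - apply Forall_app. split; [|constructor; [|constructor]]; assumption.
  - apply supp_admissible_exchange with a b; try assumption.
    left. apply inverted_seg_sub; [|apply supp_admissible_adjacent with pre r]; assumption.
Qed.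

Definition inversions_with (e : seg) (G : list seg) : nat := length (filter (invertedb e) G).

Fixpoint inversions (G : list seg) : nat :=
  match G with [] => 0 | e :: G' => inversions_with e G' + inversions G' end%nat.

Lemma inversions_with_sort_step e G G' :
  sort_step G G' -> inversions_with e G' = inversions_with e G.
Proof.
  unfold inversions_with. induction 1 as [a b r _|f G G' _ IH]; cbn [filter].
  - destruct (canon_rex_supp a b) as [Ha Hb].
    rewrite (invertedb_supp e e _ b eq_refl Ha), (invertedb_supp e e _ a eq_refl Hb).
    destruct (invertedb e a), (invertedb e b); reflexivity.
  - destruct (invertedb e f); cbn [length]; rewrite IH; reflexivity.
Qed.

Lemma inversions_sort_step G G' : sort_step G G' -> (inversions G' < inversions G)%nat.
Proof.
  induction 1 as [a b r Hab|e G G' Hstep IH]; cbn [inversions].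
  - destruct (canon_rex_supp a b) as [Ha Hb]. unfold inversions_with; cbn [filter].
    rewrite (invertedb_supp _ b _ a Ha Hb).
    rewrite (filter_ext _ (invertedb b) (fun f => invertedb_supp _ b f f Ha eq_refl)).
    rewrite (filter_ext _ (invertedb a) (fun f => invertedb_supp _ a f f Hb eq_refl)).
    assert (Hba : invertedb b a = false).
    { apply not_true_iff_false. rewrite invertedb_spec. unfold inverted in *. lia. }
    apply invertedb_spec in Hab. rewrite Hab, Hba. cbn [length]. lia.
  - rewrite (inversions_with_sort_step e G G' Hstep). lia.
Qed.

Lemma sort_step_noetherian : Noetherian (list seg) sort_step.
Proof. exact (Noetherian_of_measure sort_step inversions inversions_sort_step). Qed.

Lemma sort_step_not_Sorted G G' : sort_step G G' -> ~ Sorted precedes G.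
Proof.
  induction 1 as [a b r Hab|e G G' _ IH]; intros Hs; inversion Hs as [|? ? Hs' Hhd]; subst.
  - inversion Hhd. unfold precedes, inverted in *. lia.
  - exact (IH Hs').
Qed.

Lemma sort_step_or_Sorted G : (exists G', sort_step G G') \/ Sorted precedes G.
Proof.
  induction G as [|e G [[G' Hstep]|Hs]].
  - right. constructor.
  - left. exists (e :: G'). constructor. exact Hstep.
  - destruct G as [|f G]; [right; repeat constructor|].
    destruct (precedes_or_inverted e f) as [Hef|Hef].
    + right. constructor; [|constructor]; assumption.
    + left. eexists. constructor. exact Hef.
Qed.

Lemma irreducible_Sorted G : irreducible sort_step G <-> Sorted precedes G.
Proof.
  split.
  - intros Hirr. destruct (sort_step_or_Sorted G) as [[G' Hstep]|Hs]; [|exact Hs].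
    exfalso. exact (Hirr G' Hstep).
  - intros Hs G' Hstep. exact (sort_step_not_Sorted G G' Hstep Hs).
Qed.

Lemma sort_step_decidable G : (exists G', sort_step G G') \/ irreducible sort_step G.
Proof.
  rewrite irreducible_Sorted. apply sort_step_or_Sorted.
Qed.

Lemma sort_step_head_coherent a b r G :
  canon_admissible (a :: b :: r) -> inverted a b -> sort_step (a :: b :: r) G ->
  coherent (list seg) sort_step (fst (canon_rex a b) :: snd (canon_rex a b) :: r) G.
Proof.
  intros [Hc Ha] Hab Hstep.
  destruct (canon_rex_supp a b) as [Hy1 Hx1].
  inversion Hstep as [? ? ? _|? ? G' Hstep']; subst.
  - exists (fst (canon_rex a b) :: snd (canon_rex a b) :: r). split; constructor.
  - inversion Hstep' as [? c r' Hbc|? ? r' Hr]; subst.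
    + inversion Hc as [|? ? Hca Hc1]; inversion Hc1 as [|? ? Hcb Hc2];
        inversion Hc2 as [|? ? Hcc _]; subst.
      pose proof (inverted_seg_sub a b Hab (supp_admissible_adjacent [] a b (c :: r') Ha)) as Hsab.
      pose proof (inverted_seg_sub b c Hbc (supp_admissible_adjacent [a] b c r' Ha)) as Hsbc.
      assert (Hac : inverted a c) by (unfold inverted in *; lia).
      destruct (canon_rex_braid a b c Hca Hcb Hcc Hsab Hsbc) as (Hz & Hy & Hx).
      destruct (canon_rex_supp (snd (canon_rex a b)) c) as [Hz2 _].
      destruct (canon_rex_supp b c) as [Hz4 Hy4].
      destruct (canon_rex_supp a (fst (canon_rex b c))) as [_ Hx5].
      eexists. split.
      * eapply Rstar_n; [apply sort_step_cons, sort_step_here|].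
        { exact (inverted_supp _ _ _ _ (eq_sym Hx1) eq_refl Hac). }
        eapply Rstar_n; [apply sort_step_here|constructor].
        exact (inverted_supp _ _ _ _ (eq_sym Hy1) (eq_sym Hz2) Hbc).
      * eapply Rstar_n; [apply sort_step_here|].
        { exact (inverted_supp _ _ _ _ eq_refl (eq_sym Hz4) Hac). }
        eapply Rstar_n; [apply sort_step_cons, sort_step_here|].
        { exact (inverted_supp _ _ _ _ (eq_sym Hx5) (eq_sym Hy4) Hab). }
        rewrite Hz, Hy, Hx. constructor.
    + exists (fst (canon_rex a b) :: snd (canon_rex a b) :: r'). split.
      * apply Rstar_contains_R. do 2 constructor. exact Hr.
      * apply Rstar_contains_R. constructor. exact Hab.
Qed.

Lemma sort_step_locally_confluent G :
  canon_admissible G -> locally_confluent (list seg) sort_step G.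
Proof.
  intros Hg G1 G2 H1. revert G2 Hg.
  induction H1 as [a b r Hab|e G G1 H1 IH]; intros G2 Hg H2.
  - exact (sort_step_head_coherent a b r G2 Hg Hab H2).
  - inversion H2 as [? b r Heb|? ? G2' H2']; subst.
    + destruct (sort_step_head_coherent e b r (e :: G1) Hg Heb (sort_step_cons _ _ _ H1))
        as (w & H2w & H1w).
      exists w. split; assumption.
    + destruct (IH G2' (canon_admissible_tail e G Hg) H2') as (w & H1w & H2w).
      exists (e :: w). split; apply Rstar_sort_step_cons; assumption.
Qed.

Lemma R_step_valid F F' : Forall valid_seg F -> R_step F F' -> Forall valid_seg F'.
Proof.
  intros Hv (pre & post & e1 & e2 & -> & _ & ->).
  apply Forall_app in Hv as [Hpre Hv]. inversion Hv as [|? ? V1 Hv']; subst.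
  inversion Hv' as [|? ? V2 Hpost]; subst.
  destruct (valid_row_exchange e1 e2 V1 V2).
  apply Forall_app. split; [|constructor; [|constructor]]; assumption.
Qed.

Lemma R_step_supp_admissible F F' : supp_admissible F -> R_step F F' -> supp_admissible F'.
Proof.
  intros Ha (pre & post & e1 & e2 & -> & Hn & ->).
  destruct (row_exchange_supp e1 e2). apply supp_admissible_exchange with e1 e2; assumption.
Qed.

Lemma in_class_valid_admissible E F : Forall valid_seg E -> supp_admissible E -> in_class E F ->
  Forall valid_seg F /\ supp_admissible F.
Proof.
  intros Hv Ha HF. induction HF as [F F' Hstep| |]; try tauto.
  split; [apply R_step_valid with F | apply R_step_supp_admissible with F]; assumption.
Qed.

Lemma canon_admissible_map_canon F :
  Forall valid_seg F -> supp_admissible F -> canon_admissible (map canon F).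
Proof.
  intros Hv Ha. split.
  - apply Forall_map. exact (Forall_impl _ canonical_canon Hv).
  - unfold supp_admissible. rewrite map_map. exact Ha.
Qed.

Lemma NV_tilde_adjacent pre e1 e2 post : NV_tilde (pre ++ e1 :: e2 :: post) -> NV_pair e1 e2.
Proof.
  intros H. specialize (H (length pre)).
  replace (S (length pre)) with (length pre + 1)%nat in H by lia.
  rewrite nth_middle, app_nth2_plus in H. apply H.
  rewrite length_app. simpl. lia.
Qed.

Lemma precedes_inverted x y : precedes x y -> supp x <> supp y -> inverted y x.
Proof.
  unfold precedes, inverted, supp. intros Hp Hs.
  destruct (Z.eq_dec (sA x) (sA y)), (Z.eq_dec (sB x) (sB y)); try lia.
  exfalso. apply Hs. congruence.
Qed.

Lemma sort_step_from_exchange pre x y post :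
  canonical x -> canonical y -> nested x y -> supp x <> supp y -> precedes x y ->
  sort_step (pre ++ fst (canon_rex x y) :: snd (canon_rex x y) :: post) (pre ++ x :: y :: post).
Proof.
  intros Hx Hy Hn Hs Hp. destruct (canon_rex_supp x y) as [Hy' Hx'].
  pose proof (inverted_supp y _ x _ (eq_sym Hy') (eq_sym Hx') (precedes_inverted x y Hp Hs)) as Hi.
  pose proof (sort_step_app pre _ _ post Hi) as Hstep.
  rewrite canon_rex_involutive in Hstep; assumption.
Qed.

Lemma map_canon_exchange pre e1 e2 post : valid_seg e1 -> valid_seg e2 ->
  map canon (pre ++ fst (row_exchange e1 e2) :: snd (row_exchange e1 e2) :: post) =
  map canon pre ++ fst (canon_rex (canon e1) (canon e2)) ::
    snd (canon_rex (canon e1) (canon e2)) :: map canon post.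
Proof. intros V1 V2. rewrite map_app, <- canon_rex_canon by assumption. reflexivity. Qed.

Lemma R_step_map_canon F F' : Forall valid_seg F -> NV_tilde F -> R_step F F' ->
  map canon F' = map canon F \/ sort_step (map canon F) (map canon F') \/
  sort_step (map canon F') (map canon F).
Proof.
  intros Hv Hnv (pre & post & e1 & e2 & -> & Hn & ->).
  pose proof (NV_tilde_adjacent pre e1 e2 post Hnv) as Hnv12.
  apply Forall_app in Hv as [_ Hv]. inversion Hv as [|? ? V1 Hv']; subst.
  inversion Hv' as [|? ? V2 _]; subst.
  rewrite (map_canon_exchange pre e1 e2 post V1 V2), map_app.
  assert (Hdec : {supp e1 = supp e2} + {supp e1 <> supp e2}) by (decide equality; apply Z.eq_dec).
  destruct (precedes_or_inverted e1 e2) as [Hp|Hi]; [destruct Hdec as [Hs|Hs]|].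
  - left. rewrite <- canon_rex_canon, (canon_rex_same_supp e1 e2); trivial.
  - right; right. apply sort_step_from_exchange; trivial; apply canonical_canon; assumption.
  - right; left. apply sort_step_app. exact Hi.
Qed.

Lemma sort_step_lift F G : Forall valid_seg F -> supp_admissible F ->
  sort_step (map canon F) G -> exists F', R_step F F' /\ map canon F' = G.
Proof.
  intros Hv Ha Hstep.
  destruct (sort_step_app_inv _ _ Hstep) as (pre & a & b & r & HF & Hab & ->).
  apply map_eq_app in HF as (F1 & F2 & -> & <- & HF2).
  apply map_eq_cons in HF2 as (e1 & F3 & -> & <- & HF3).
  apply map_eq_cons in HF3 as (e2 & F4 & -> & <- & <-).
  apply Forall_app in Hv as [_ Hv]. inversion Hv as [|? ? V1 Hv']; subst.
  inversion Hv' as [|? ? V2 _]; subst.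
  exists (F1 ++ fst (row_exchange e1 e2) :: snd (row_exchange e1 e2) :: F4). split.
  - exists F1, F4, e1, e2. repeat split. left.
    apply inverted_seg_sub; [exact Hab | apply supp_admissible_adjacent with F1 F4, Ha].
  - apply map_canon_exchange; assumption.
Qed.

Lemma Rstar_sort_step_lift F G : Forall valid_seg F -> supp_admissible F ->
  Rstar (list seg) sort_step (map canon F) G -> exists F', in_class F F' /\ map canon F' = G.
Proof.
  intros Hv Ha Hstar. remember (map canon F) as G0 eqn:HG0. revert F Hv Ha HG0.
  induction Hstar as [|G0 G1 G Hstep _ IH]; intros F Hv Ha ->.
  - exists F. split; [apply rt_refl | reflexivity].
  - destruct (sort_step_lift F G1 Hv Ha Hstep) as (F1 & HF1 & <-).
    destruct (IH F1 (R_step_valid F F1 Hv HF1) (R_step_supp_admissible F F1 Ha HF1) eq_refl)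
      as (F' & HF' & <-).
    exists F'. split; [apply rt_trans with F1; [apply rt_step|]|]; trivial.
Qed.

Lemma normal_form_in_class E F N :
  Forall valid_seg E -> supp_admissible E -> NV E -> in_class E F ->
  normal_form sort_step (map canon E) N -> normal_form sort_step (map canon F) N.
Proof.
  intros Hv Ha Hnv HF HN. apply clos_rt_rtn1 in HF.
  induction HF as [|F1 F2 Hstep HF IH]; [exact HN|].
  apply clos_rtn1_rt in HF.
  destruct (in_class_valid_admissible E F1 Hv Ha HF) as [Hv1 Ha1].
  destruct (R_step_map_canon F1 F2 Hv1 (Hnv F1 HF) Hstep) as [Heq|[Hfwd|Hbwd]].
  - rewrite Heq. exact IH.
  - apply (normal_form_step sort_step sort_step_noetherian sort_step_decidable canon_admissible
             canon_admissible_sort_step sort_step_locally_confluent (map canon F1)); trivial.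
    apply canon_admissible_map_canon; assumption.
  - destruct IH as [Hstar Hirr]. split; [apply Rstar_n with (map canon F1)|]; assumption.
Qed.

Lemma Sorted_map_canon F : Sorted precedes (map canon F) <-> Sorted precedes F.
Proof.
  induction F as [|e F IH]; [split; constructor|].
  split; intros Hs; inversion Hs as [|? ? Hs' Hhd]; subst; constructor; try (apply IH; assumption);
    destruct F; inversion Hhd; constructor; assumption.
Qed.

Lemma P2_Sorted E : P2 E <-> Sorted precedes E.
Proof.
  split.
  - induction E as [|e E IH]; intros H; constructor.
    + apply IH. intros i j Hij Hj. apply (H (S i) (S j)); simpl; lia.
    + destruct E as [|f E]; constructor. apply (H 0%nat 1%nat); simpl; lia.
  - intros Hs. apply Sorted_StronglySorted in Hs; [|unfold precedes; intros x y z; lia].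
    induction Hs as [|e E _ IH Hall]; intros i j Hij Hj; simpl in *; [lia|].
    destruct i, j; try lia.
    + rewrite Forall_forall in Hall. apply Hall, nth_In. lia.
    + apply IH; lia.
Qed.

Lemma canon_seg_equiv e f : canon e = canon f -> seg_equiv e f.
Proof.
  destruct e as [A B l h], f as [A' B' l' h']. unfold canon, seg_equiv, blen; cbn [sA sB sl seta].
  intros He.
  pose proof (f_equal sA He) as HA. pose proof (f_equal sB He) as HB.
  pose proof (f_equal sl He) as Hl. pose proof (f_equal seta He) as Hh.
  cbn [sA sB sl seta] in HA, HB, Hl, Hh. subst A' B' l'.
  repeat split. destruct (Z.eqb_spec (A - B + 1) (2 * l)); auto.
Qed.

Lemma map_canon_seq_equiv F1 F2 : map canon F1 = map canon F2 -> seq_equiv F1 F2.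
Proof.
  revert F2. induction F1 as [|e F1 IH]; intros [|f F2] H; try discriminate; cbn [map] in H; constructor.
  - apply canon_seg_equiv. congruence.
  - apply IH. congruence.
Qed.

Theorem lemma4p14 (E : list seg) :
  Forall valid_seg E -> admissible E -> NV E ->
  exists E', in_class E E' /\ P2 E' /\
    forall E'', in_class E E'' -> P2 E'' -> seq_equiv E'' E'.
Proof.
  intros Hv Hadm Hnv.
  pose proof (admissible_supp_admissible E Hadm) as Ha.
  destruct (normal_form_exists sort_step sort_step_noetherian sort_step_decidable (map canon E))
    as (N & HstarN & HirrN).
  assert (HP2_N : forall F, in_class E F -> P2 F -> map canon F = N).
  { intros F HF HP2.
    destruct (normal_form_in_class E F N Hv Ha Hnv HF (conj HstarN HirrN)) as [HstarF _].
    symmetry. apply (Rstar_irreducible sort_step) with (2 := HstarF).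
    apply irreducible_Sorted, Sorted_map_canon, P2_Sorted, HP2. }
  destruct (Rstar_sort_step_lift E N Hv Ha HstarN) as (E' & HE' & HcE').
  assert (HP2' : P2 E').
  { apply P2_Sorted, Sorted_map_canon, irreducible_Sorted. rewrite HcE'. exact HirrN. }
  exists E'. split; [exact HE'|]. split; [exact HP2'|].
  intros E'' HE'' HP2''. apply map_canon_seq_equiv.
  rewrite (HP2_N E'' HE'' HP2''), (HP2_N E' HE' HP2'). reflexivity.
Qed.
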